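(* Let $\mathcal I,\mathcal J$ be ideals on $\omega$. Then (1) $\mathfrak b_\sigma(\mathcal I,\mathcal J)=\min\{\mathfrak b_s(\mathcal I\cap\mathcal J,\mathcal J,\mathcal I),\mathrm{add}_\omega(\mathcal I,\mathcal J)\}$; (2) $\mathfrak b_\sigma(\mathcal I)=\min\{\mathfrak b_s(\mathcal I),\mathrm{add}_\omega(\mathcal I)\}$.
   Context: An ideal on $\omega$ is a family $\mathcal I\subseteq\mathcal P(\omega)$ closed under finite unions and subsets, containing all finite sets, with $\omega\notin\mathcal I$. Convention: $\min\emptyset=\infty$ and $\kappa<\infty$ for every cardinal $\kappa$. $\widehat{\mathcal P}_{\mathcal I}$ = sequences $(A_n)\in\mathcal I^\omega$ of pairwise disjoint sets; $\mathcal P_{\mathcal I}$ = those with $\bigcup_nA_n=\omega$; $\mathcal M_{\mathcal I}$ = sequences $(E_k)\in\mathcal I^\omega$ with $E_k\subseteq E_{k+1}$ for all $k$. $\mathfrak b_s(\mathcal I,\mathcal J,\mathcal K)=\min\{|\mathcal E|:\mathcal E\subseteq\widehat{\mathcal P}_{\mathcal K}$ and for every $(A_n)\in\mathcal P_{\mathcal J}$ there is $(E_n)\in\mathcal E$ with $\bigcup_n(A_{n+1}\cap\bigcup_{i\le n}E_i)\notin\mathcal I\}$; $\mathfrak b_\sigma(\mathcal I,\mathcal J)=\min\{|\mathcal E|:\mathcal E\subseteq\mathcal M_{\mathcal I}$ and for every $(A_n)\in\mathcal M_{\mathcal J}$ there is $(E_n)\in\mathcal E$ with $E_n\not\subseteq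 A_n$ for infinitely many $n\}$; $\mathrm{add}_\omega(\mathcal I,\mathcal J)=\min\{|\mathcal A|:\mathcal A\subseteq\mathcal I$ and for every $(B_n)\in\mathcal J^\omega$ there is $A\in\mathcal A$ with $A\not\subseteq B_n$ for all $n\}$. $\mathfrak b_s(\mathcal I)=\mathfrak b_s(\mathcal I,\mathcal I,\mathcal I)$, $\mathfrak b_\sigma(\mathcal I)=\mathfrak b_\sigma(\mathcal I,\mathcal I)$, $\mathrm{add}_\omega(\mathcal I)=\mathrm{add}_\omega(\mathcal I,\mathcal I)$. *)

From mathcomp Require Import all_boot all_order.
From mathcomp Require Import boolp classical_sets cardinality.
Set Implicit Arguments. Unset Strict Implicit. Unset Printing Implicit Defensive.
Local Open Scope classical_set_scope.
Local Open Scope card_scope.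

Definition is_ideal (I : set (set nat)) : Prop :=
  (forall A B, I A -> I B -> I (A `|` B)) /\
  (forall A B, B `<=` A -> I A -> I B) /\
  (forall A, finite_set A -> I A) /\
  ~ I [set: nat].

Definition hatP (K : set (set nat)) (A : nat -> set nat) : Prop :=
  (forall n, K (A n)) /\ (forall m n, m <> n -> A m `&` A n = set0).

Definition partP (J : set (set nat)) (A : nat -> set nat) : Prop :=
  hatP J A /\ \bigcup_n A n = [set: nat].

Definition incM (I : set (set nat)) (E : nat -> set nat) : Prop :=
  (forall k, I (E k)) /\ (forall k, E k `<=` E k.+1).

(* Families witnessing b_s(I,J,K): the cardinal b_s(I,J,K) is the least
   cardinality of such a family (infinity if there is none). *)
Definition bs_family (I J K : set (set nat)) (F : set (nat -> set nat)) : Prop :=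
  F `<=` hatP K /\
  forall A, partP J A -> exists2 E, F E &
    ~ I (\bigcup_n (A n.+1 `&` \bigcup_(i in [set i | (i <= n)%N]) E i)).

Definition bsigma_family (I J : set (set nat)) (F : set (nat -> set nat)) : Prop :=
  F `<=` incM I /\
  forall A, incM J A -> exists2 E, F E & infinite_set [set n | ~ (E n `<=` A n)].

Definition addw_family (I J : set (set nat)) (F : set (set nat)) : Prop :=
  F `<=` I /\
  forall B : nat -> set nat, (forall n, J (B n)) ->
    exists2 A, F A & forall n, ~ (A `<=` B n).

(* Comparison of minima of classes of cardinalities, with min(empty) = infinity.
   min_le W1 W2 : min{|X| : W1 X} <= min{|Y| : W2 Y}. *)
Definition min_le T U (W1 : set (set T)) (W2 : set (set U)) : Prop :=
  forall Y, W2 Y -> exists X, W1 X /\ (X #<= Y).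

(* min2_le W1 W2 W3 : min{ min W1, min W2 } <= min W3. *)
Definition min2_le T U V (W1 : set (set T)) (W2 : set (set U))
  (W3 : set (set V)) : Prop :=
  forall Z, W3 Z ->
    (exists X, W1 X /\ (X #<= Z)) \/ (exists Y, W2 Y /\ (Y #<= Z)).

(* min W3 = min{ min W1, min W2 } *)
Definition min_eq_min2 T U V (W3 : set (set V)) (W1 : set (set T))
  (W2 : set (set U)) : Prop :=
  min_le W3 W1 /\ min_le W3 W2 /\ min2_le W1 W2 W3.

(** Increasing sequences and partitions are interchangeable: an increasing
    sequence [E] yields the disjoint sequence of its differences [seqD E],
    whose partial unions give back [E], while a partition [A] yields the
    increasing sequence of its partial unions.  For [b_sigma <= b_s] one pads
    an increasing [A] in [J] by [{0..n}] so that its difference sequence [P]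
    partitions omega; if the partial unions of some [E] were eventually (from
    [N] on) below [A], the set [\bigcup_n (P_(n+1) ∩ (E_0 ∪ ... ∪ E_n))] would
    lie inside [A_N ∩ (E_0 ∪ ... ∪ E_N)], a set in [I ∩ J].  Conversely, if the
    differences of a [b_sigma] family fail to be a [b_s] family, there is a
    partition [A] for which all those sets lie in [I ∩ J]; they form an
    [add_omega] family, because covering one of them by [B_k] forces [E_n]
    into [A_0 ∪ ... ∪ A_n ∪ B_0 ∪ ... ∪ B_n] for every [n >= k]. *)
From mathcomp Require Import all_boot all_order.
From mathcomp Require Import boolp classical_sets cardinality sequences.
Set Implicit Arguments. Unset Strict Implicit. Unset Printing Implicit Defensive.
Local Open Scope classical_set_scope.

Section partial_unions.
Variable T : Type.
Implicit Types A E : (set T)^nat.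

Definition partial_union E n := \bigcup_(i in [set i | (i <= n)%N]) E i.

Definition bs_set A E := \bigcup_n (A n.+1 `&` partial_union E n).

Lemma sub_partial_union E i n : (i <= n)%N -> E i `<=` partial_union E n.
Proof. by move=> iln x Eix; exists i. Qed.

Lemma le_partial_union E m n : (m <= n)%N ->
  partial_union E m `<=` partial_union E n.
Proof. by move=> mn x [i /= im Eix]; exists i => //=; exact: leq_trans mn. Qed.

Lemma nondecreasing_seq_subset E : (forall k, E k `<=` E k.+1) ->
  nondecreasing_seq E.
Proof. by move=> E_incr; apply/nondecreasing_seqP => k; exact/subsetPset. Qed.

Lemma seqD_sub E n : seqD E n `<=` E n.
Proof. by case: n => [|n] // x []. Qed.

Lemma seqD_disjoint E : nondecreasing_seq E ->
  forall m n, m <> n -> seqD E m `&` seqD E n = set0.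
Proof.
move=> ndE m n; apply: contra_notP => /eqP/set0P meet.
exact: (trivIset_seqD ndE).
Qed.

Lemma partial_union_seqD E n : nondecreasing_seq E ->
  partial_union (seqD E) n = E n.
Proof.
by move=> ndE; rewrite -(nondecreasing_bigsetU_seqD n ndE) -bigcup_mkord.
Qed.

Lemma bs_set_seqD_sub A E N : nondecreasing_seq A ->
  (forall n, (N <= n)%N -> partial_union E n `<=` A n) ->
  bs_set (seqD A) E `<=` A N `&` partial_union E N.
Proof.
move=> ndA EA x [n _ [[An1x Anx] Enx]].
have [Nn|nN] := leqP N n; first by case: Anx; exact: EA Enx.
split; last by move: Enx; apply: le_partial_union; exact: ltnW.
by move/subsetPset: (ndA _ _ nN); exact.
Qed.

Lemma partial_union_sub_bs_set A E n : \bigcup_m A m = [set: T] ->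
  partial_union E n `<=` partial_union A n `|` bs_set A E.
Proof.
move=> A_cover x Enx; have [m _ Amx] : (\bigcup_m A m) x by rewrite A_cover.
have [mn|nm] := leqP m n; first by left; exists m.
case: m nm Amx => // m; rewrite ltnS => nm Amx; right; exists m => //.
by split=> //; move: Enx; apply: le_partial_union.
Qed.

End partial_unions.

Lemma finite_nat_bounded (S : set nat) : finite_set S -> exists N, S `<=` `I_N.
Proof.
move=> /finite_fsetP[X ->]; exists (\max_(x <- finmap.enum_fset X) x).+1.
by move=> n /= Xn; rewrite ltnS; exact: leq_bigmax_seq.
Qed.

Section ideals.
Variable I : set (set nat).
Hypothesis idealI : is_ideal I.

Lemma idealS A B : A `<=` B -> I B -> I A.
Proof. by case: idealI => _ [+ _]; exact. Qed.

Lemma idealU A B : I A -> I B -> I (A `|` B).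
Proof. by case: idealI => + _; exact. Qed.

Lemma ideal_finite A : finite_set A -> I A.
Proof. by case: idealI => _ [_ [+ _]]; exact. Qed.

Lemma ideal_partial_union E n : (forall k, I (E k)) -> I (partial_union E n).
Proof.
move=> IE; elim: n => [|n IH].
  by apply: (idealS _ (IE 0)) => x [i /=]; rewrite leqn0 => /eqP ->.
apply: (idealS _ (idealU IH (IE n.+1))) => x [i /=].
by rewrite leq_eqVlt => /orP[/eqP -> | ilt] Eix; [right | left; exists i].
Qed.

Lemma incM_partial_union E : (forall k, I (E k)) -> incM I (partial_union E).
Proof.
by move=> IE; split=> k; [exact: ideal_partial_union | exact: le_partial_union].
Qed.

Lemma hatP_seqD E : incM I E -> hatP I (seqD E).
Proof.
move=> [IE E_incr]; split.
  by move=> n; apply: (idealS _ (IE n)); exact: seqD_sub.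
exact/seqD_disjoint/nondecreasing_seq_subset.
Qed.

Lemma partP_seqD E : incM I E -> \bigcup_n E n = [set: nat] -> partP I (seqD E).
Proof.
by move=> ME E_cover; split; [exact: hatP_seqD | rewrite eq_bigcup_seqD].
Qed.

Lemma incM_pad E : incM I E -> incM I (fun n => E n `|` `I_n.+1).
Proof.
move=> [IE E_incr]; split=> k; first exact: idealU (IE k) (ideal_finite _).
by apply: setUSS (E_incr k) _ => i /= /ltnW.
Qed.

Lemma bigcup_pad E : \bigcup_n (E n `|` `I_n.+1) = [set: nat].
Proof. by apply/seteqP; split=> // x _; exists x => //; right => /=. Qed.

End ideals.

Lemma bsigma_le_add_omega (I J : set (set nat)) :
  min_le (bsigma_family I J) (addw_family I J).
Proof.
move=> Y [YI HY].
exists [set fun=> A | A in Y]; split; last exact: card_image_le.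
split; first by move=> _ [A YA <-]; split=> [k|k //]; exact: YI.
move=> A [AJ _]; have [C YC notC] := HY A AJ.
exists (fun _ => C); first by exists C.
by apply: sub_infinite_set infinite_nat => n _; exact: notC.
Qed.

Lemma bsigma_le_bs (I J : set (set nat)) : is_ideal I -> is_ideal J ->
  min_le (bsigma_family I J) (bs_family (I `&` J) J I).
Proof.
move=> idealI idealJ F [F_hatP HF].
exists [set partial_union E | E in F]; split; last exact: card_image_le.
split=> [_ [E FE <-]|A MA].
  exact: (incM_partial_union idealI (F_hatP E FE).1).
pose A' n := A n `|` `I_n.+1.
have MA' : incM J A' := incM_pad idealJ MA.
have [E FE notIJ] := HF _ (partP_seqD idealJ MA' (bigcup_pad A)).
exists (partial_union E); first by exists E.
move=> /finite_nat_bounded[N bounded]; apply: notIJ.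
have EA' n : (N <= n)%N -> partial_union E n `<=` A' n.
  move=> Nn; apply: subset_trans (@subsetUl _ _ _); apply: contrapT => notEA.
  by have := bounded n notEA; rewrite /= ltnNge Nn.
have sub := bs_set_seqD_sub (nondecreasing_seq_subset MA'.2) EA'; split.
- apply: (idealS idealI (subset_trans sub (@subIsetr _ _ _))).
  exact: (ideal_partial_union idealI N (F_hatP E FE).1).
- exact: (idealS idealJ (subset_trans sub (@subIsetl _ _ _)) (MA'.1 N)).
Qed.

Lemma addw_family_bs_set (I J : set (set nat)) Z A : is_ideal J ->
  bsigma_family I J Z -> partP J A ->
  (forall E, Z E -> (I `&` J) (bs_set A (seqD E))) ->
  addw_family I J [set bs_set A (seqD E) | E in Z].
Proof.
move=> idealJ [ZI HZ] [[AJ _] A_cover] IJ_bs.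
split=> [_ [E ZE <-]|B BJ]; first exact: (IJ_bs E ZE).1.
apply: contrapT => notB.
have bounded E : Z E -> exists k, bs_set A (seqD E) `<=` B k.
  move=> ZE; apply: contrapT => noB; apply: notB.
  exists (bs_set A (seqD E)); first by exists E.
  by move=> n sub; apply: noB; exists n.
pose C n := partial_union A n `|` partial_union B n.
have MC : incM J C.
  split=> k; last exact: setUSS (le_partial_union _) (le_partial_union _).
  exact: (idealU idealJ (ideal_partial_union idealJ k AJ)
                        (ideal_partial_union idealJ k BJ)).
have [E ZE infE] := HZ C MC; have [k Ek] := bounded E ZE.
apply: infE; apply: sub_finite_set (finite_II k) => n /= notEC.
rewrite ltnNge; apply/negP => kn; apply: notEC.
rewrite -(partial_union_seqD n (nondecreasing_seq_subset (ZI E ZE).2)).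
apply: subset_trans (partial_union_sub_bs_set A_cover) _.
exact/setUS/(subset_trans Ek)/sub_partial_union.
Qed.

Lemma min_bs_add_omega_le_bsigma (I J : set (set nat)) :
  is_ideal I -> is_ideal J ->
  min2_le (bs_family (I `&` J) J I) (addw_family I J) (bsigma_family I J).
Proof.
move=> idealI idealJ Z bsigmaZ.
have [bsZ|not_bsZ] := pselect (bs_family (I `&` J) J I [set seqD E | E in Z]).
  by left; exists [set seqD E | E in Z]; split=> //; exact: card_image_le.
right; have [A [PA IJ_bs]] : exists A, partP J A /\
    forall E, Z E -> (I `&` J) (bs_set A (seqD E)).
  apply: contrapT => noA; apply: not_bsZ; split.
    by move=> _ [E ZE <-]; exact: (hatP_seqD idealI (bsigmaZ.1 E ZE)).
  move=> A PA; apply: contrapT => noE; apply: noA; exists A; split=> // E ZE.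
  by apply: contrapT => notIJ; apply: noE; exists (seqD E) => //; exists E.
exists [set bs_set A (seqD E) | E in Z]; split; last exact: card_image_le.
exact: addw_family_bs_set.
Qed.

Lemma bsigma_eq_min_bs_add_omega (I J : set (set nat)) :
  is_ideal I -> is_ideal J ->
  min_eq_min2 (bsigma_family I J) (bs_family (I `&` J) J I) (addw_family I J).
Proof.
move=> idealI idealJ; split; first exact: bsigma_le_bs.
by split; [exact: bsigma_le_add_omega | exact: min_bs_add_omega_le_bsigma].
Qed.

Theorem theorem5p2 (I J : set (set nat)) :
  is_ideal I -> is_ideal J ->
  (* (1) b_sigma(I,J) = min{ b_s(I cap J, J, I), add_omega(I,J) } *)
  min_eq_min2 (bsigma_family I J) (bs_family (I `&` J) J I) (addw_family I J) /\
  (* (2) b_sigma(I) = min{ b_s(I), add_omega(I) } *)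
  min_eq_min2 (bsigma_family I I) (bs_family I I I) (addw_family I I).
Proof.
move=> idealI idealJ; split; first exact: bsigma_eq_min_bs_add_omega.
by have := bsigma_eq_min_bs_add_omega idealI idealI; rewrite setIid.
Qed.
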